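(* Let $n$ be a positive integer. (1) For $q>2$, $$\tilde\psi^{(n)}(q)=\frac12(-1)^{n+1}(n-1)!\left(\frac1{(q-2)^n}-\frac1{(q-1)^n}\right)+(-1)^n\sum_{k=1}^\infty\frac{2^k(n+k)!}{(k+1)!}\,\zeta_E(n+k+1,q).$$ (2) For $q>1$, $$\tilde\psi^{(n)}(q)=\frac12(-1)^{n+1}(n-1)!\left(\frac1{(q-1)^n}-\frac1{q^n}\right)+(-1)^n\sum_{k=1}^\infty\frac{(n+2k)!}{(2k+1)!}\,\zeta_E(n+2k+1,q).$$
   Context: For $q>0$, $\zeta_E(z,q)=\sum_{n=0}^\infty (-1)^n (n+q)^{-z}$ for $\mathrm{Re}(z)>0$, extended by analytic continuation to an entire function of $z$. The modified digamma function is $\tilde\psi(q):=-\zeta_E(1,q)=-\sum_{n\ge0}\frac{(-1)^n}{n+q}$ for $q>0$, and $\tilde\psi^{(n)}$ denotes its $n$-th derivative in $q$. *)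

From Stdlib Require Import Reals.
From Coquelicot Require Import Coquelicot.
Open Scope R_scope.

(* For Re z > 0 the series converges and equals the analytic continuation;
   the statement only uses z = 1 and integer z >= 3. *)
Definition zetaE (z q : R) : R :=
  Series (fun m : nat => (-1) ^ m * Rpower (INR m + q) (- z)).

Definition psiE (q : R) : R := - zetaE 1 q.

From Stdlib Require Import Reals Lra Lia Ranalysis5.
From Coquelicot Require Import Coquelicot.
Open Scope R_scope.

(* Termwise differentiation gives psiE^(n)(q) = (-1)^(n+1) n! zetaE(n+1, q).
   For x = m + q the negative binomial series
     sum_j (n+j-1)!/j! c^j / x^(n+j) = (n-1)! / (x-c)^n,
   taken for c = 2 (resp. the odd part of its difference for c = 1 and c = -1),
   writes (x-2)^-n - x^-n (resp. (x-1)^-n - (x+1)^-n) as a nonnegative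
   combination of powers x^-s with s > n.  Summing over m with signs (-1)^m turns
   x^-s into zetaE(s, q), while the left side telescopes:
   zetaE(n, q) - zetaE(n, q+2) = q^-n - (q+1)^-n.  Exchanging the two sums is
   legitimate because the remainder of an alternating series with decreasing
   terms is bounded by its first omitted term. *)

Lemma is_lim_seq_of_Rabs_le (u e : nat -> R) (l : R) :
  (forall n, Rabs (u n - l) <= e n) -> is_lim_seq e 0 -> is_lim_seq u l.
Proof.
  intros Hue He.
  assert (Hd : is_lim_seq (fun n => u n - l) 0).
  { apply is_lim_seq_abs_0.
    apply (is_lim_seq_le_le (fun _ => 0) _ e).
    - intro n. split; [apply Rabs_pos|apply Hue].
    - apply is_lim_seq_const.
    - exact He. }
  pose proof (is_lim_seq_plus' _ _ _ _ Hd (is_lim_seq_const l)) as Hu.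
  rewrite Rplus_0_l in Hu.
  eapply is_lim_seq_ext; [|exact Hu]. intro n; simpl; ring.
Qed.

Lemma is_series_ext_eq (a b : nat -> R) (la lb : R) :
  (forall n, a n = b n) -> la = lb -> is_series a la -> is_series b lb.
Proof. intros Hab <-. now apply is_series_ext. Qed.

Lemma is_series_tail (u : nat -> R) (l : R) (M : nat) :
  is_series u l -> is_series (fun k => u (S M + k)%nat) (l - sum_n u M).
Proof.
  intro Hu. apply is_series_incr_n; [lia|].
  match goal with |- is_series _ ?x => replace x with l; [exact Hu|] end.
  change (l = l - sum_n u M + sum_n u M). ring.
Qed.

Lemma sum_n_Rmult_l (a : R) (u : nat -> R) (N : nat) :
  sum_n (fun k => a * u k) N = a * sum_n u N.
Proof. exact (sum_n_mult_l a u N). Qed.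

Lemma is_series_sum_n_swap (f : nat -> nat -> R) (G : nat -> R) (M : nat) :
  (forall m, is_series (fun j => f j m) (G m)) ->
  is_series (fun j => sum_n (f j) M) (sum_n G M).
Proof.
  intro HG. induction M as [|M IH].
  - rewrite sum_O. eapply is_series_ext; [|exact (HG O)]. intro j. now rewrite sum_O.
  - rewrite sum_Sn. eapply is_series_ext; [|exact (is_series_plus _ _ _ _ IH (HG (S M)))].
    intro j. now rewrite sum_Sn.
Qed.

Lemma is_series_odd_terms (d : nat -> R) (l : R) :
  (forall k, d (2 * k)%nat = 0) -> is_series d l ->
  is_series (fun k => d (2 * k + 1)%nat) l.
Proof.
  intros Hev Hd.
  assert (Hsum : forall K, sum_n (fun k => d (2 * k + 1)%nat) K = sum_n d (2 * K + 1)).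
  { induction K as [|K IH].
    - rewrite sum_O. simpl. rewrite sum_Sn, sum_O. pose proof (Hev O) as H0. simpl in H0.
      rewrite H0. unfold plus; simpl. ring.
    - replace (2 * S K + 1)%nat with (S (S (2 * K + 1))) by lia.
      rewrite !sum_Sn, IH. replace (S (2 * K + 1)) with (2 * S K)%nat by lia.
      rewrite Hev. replace (S (2 * S K)) with (2 * S K + 1)%nat by lia.
      set (x := sum_n d (2 * K + 1)). set (y := d (2 * S K + 1)%nat).
      unfold plus; simpl. ring. }
  apply (filterlim_ext (fun K => sum_n d (2 * K + 1))); [intro K; now rewrite Hsum|].
  apply (is_lim_seq_subseq (sum_n d) l (fun K => (2 * K + 1)%nat)); [|exact Hd].
  apply eventually_subseq. intro; lia.
Qed.

Lemma alternating_series_bound (a : nat -> R) :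
  (forall m, 0 <= a (S m) <= a m) -> is_lim_seq a 0 ->
  ex_series (fun m => (-1)^m * a m) /\ Rabs (Series (fun m => (-1)^m * a m)) <= a O.
Proof.
  intros Hdec Hlim.
  assert (Hdec' : Un_decreasing a) by (intro m; apply Hdec).
  assert (Hcv : Un_cv a 0) by now apply is_lim_seq_Reals.
  destruct (alternated_series a Hdec' Hcv) as [l Hl].
  assert (Hs : is_series (fun m => (-1)^m * a m) l) by now apply is_series_Reals.
  split; [now exists l|].
  rewrite (is_series_unique _ _ Hs).
  destruct (alternated_series_ineq a l 0 Hdec' Hcv Hl) as [Hlo Hhi].
  unfold tg_alt in Hlo, Hhi; simpl in Hlo, Hhi.
  pose proof (Hdec O). apply Rabs_le. lra.
Qed.

Lemma alternating_series_remainder (a : nat -> R) (M : nat) :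
  (forall m, 0 <= a (S m) <= a m) -> is_lim_seq a 0 ->
  Rabs (Series (fun m => (-1)^m * a m) - sum_n (fun m => (-1)^m * a m) M) <= a (S M).
Proof.
  intros Hdec Hlim.
  destruct (alternating_series_bound a Hdec Hlim) as [Hex _].
  set (b := fun k => a (S M + k)%nat).
  destruct (alternating_series_bound b) as [Hexb Hb].
  { intro m. unfold b. replace (S M + S m)%nat with (S (S M + m)) by lia. apply Hdec. }
  { apply (is_lim_seq_incr_n a (S M)) in Hlim.
    eapply is_lim_seq_ext; [|exact Hlim]. intro k. unfold b. f_equal. lia. }
  assert (Htail : Series (fun m => (-1)^m * a m) - sum_n (fun m => (-1)^m * a m) M
                  = (-1)^(S M) * Series (fun k => (-1)^k * b k)).
  { rewrite <- Series_scal_l. symmetry. apply is_series_unique.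
    eapply is_series_ext; [|exact (is_series_tail _ _ M (Series_correct _ Hex))].
    intro k. unfold b. rewrite pow_add. apply Rmult_assoc. }
  rewrite Htail, Rabs_mult, pow_1_abs, Rmult_1_l.
  replace (a (S M)) with (b O) by (unfold b; f_equal; lia). exact Hb.
Qed.

Definition zetaE_nat_term (k : nat) (q : R) (m : nat) : R := (-1)^m / (INR m + q)^k.

Definition zetaE_nat (k : nat) (q : R) : R := Series (zetaE_nat_term k q).

Lemma zetaE_INR (k : nat) (q : R) : 0 < q -> zetaE (INR k) q = zetaE_nat k q.
Proof.
  intro Hq. apply Series_ext. intro m. unfold zetaE_nat_term.
  rewrite Rpower_Ropp, Rpower_pow; [reflexivity|]. pose proof (pos_INR m). lra.
Qed.

Lemma inv_pow_shift_decr (k : nat) (q : R) (m : nat) : 0 < q ->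
  0 <= / (INR (S m) + q)^k <= / (INR m + q)^k.
Proof.
  intro Hq. pose proof (pos_INR m). rewrite S_INR. split.
  - left. apply Rinv_0_lt_compat, pow_lt. lra.
  - apply Rinv_le_contravar; [apply pow_lt; lra|]. apply pow_incr. lra.
Qed.

Lemma inv_pow_shift_le_inv (k : nat) (q : R) (m : nat) : 0 < q -> (1 <= k)%nat ->
  / (INR (S m) + q)^k <= / INR (S m).
Proof.
  intros Hq Hk. pose proof (pos_INR m). rewrite S_INR.
  apply Rinv_le_contravar; [lra|].
  apply Rle_trans with ((INR m + 1 + q)^1); [simpl; lra|].
  apply Rle_pow; [lra|exact Hk].
Qed.

Lemma is_lim_seq_inv_pow_shift (k : nat) (q : R) : 0 < q -> (1 <= k)%nat ->
  is_lim_seq (fun m => / (INR m + q)^k) 0.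
Proof.
  intros Hq Hk. apply is_lim_seq_incr_1.
  apply (is_lim_seq_le_le (fun _ => 0) _ (fun m => / INR (S m))).
  - intro m. split; [apply inv_pow_shift_decr, Hq|apply inv_pow_shift_le_inv; assumption].
  - apply is_lim_seq_const.
  - apply (is_lim_seq_incr_1 (fun m => / INR m)).
    replace (Finite 0) with (Rbar_inv p_infty) by reflexivity.
    apply is_lim_seq_inv; [apply is_lim_seq_INR|discriminate].
Qed.

Section ZetaENat.

Variables (k : nat) (q : R).
Hypotheses (Hq : 0 < q) (Hk : (1 <= k)%nat).

Let Hdecr := fun m => inv_pow_shift_decr k q m Hq.
Let Hlim := is_lim_seq_inv_pow_shift k q Hq Hk.

Lemma is_series_zetaE_nat : is_series (zetaE_nat_term k q) (zetaE_nat k q).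
Proof.
  apply Series_correct. exact (proj1 (alternating_series_bound _ Hdecr Hlim)).
Qed.

Lemma Rabs_zetaE_nat_le : Rabs (zetaE_nat k q) <= / q^k.
Proof.
  pose proof (proj2 (alternating_series_bound _ Hdecr Hlim)) as Hb.
  simpl in Hb. rewrite Rplus_0_l in Hb. exact Hb.
Qed.

Lemma zetaE_nat_remainder (M : nat) :
  Rabs (zetaE_nat k q - sum_n (zetaE_nat_term k q) M) <= / (INR (S M) + q)^k.
Proof. exact (alternating_series_remainder _ M Hdecr Hlim). Qed.

End ZetaENat.

Lemma zetaE_nat_shift (k : nat) (q : R) : 0 < q -> (1 <= k)%nat ->
  zetaE_nat k q + zetaE_nat k (q + 1) = / q^k.
Proof.
  intros Hq Hk.
  pose proof (is_series_tail _ _ 0 (is_series_zetaE_nat k q Hq Hk)) as Htail.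
  assert (Hq1 : 0 < q + 1) by lra.
  pose proof (is_series_opp _ _ (is_series_zetaE_nat k (q + 1) Hq1 Hk)) as Hopp.
  assert (E : zetaE_nat k q - sum_n (zetaE_nat_term k q) 0 = - zetaE_nat k (q + 1)).
  { rewrite <- (is_series_unique _ _ Htail). apply is_series_unique.
    eapply is_series_ext; [|exact Hopp].
    intro m. unfold zetaE_nat_term. rewrite S_INR.
    replace (INR m + (q + 1)) with (INR m + 1 + q) by ring.
    change (- ((-1)^m / (INR m + 1 + q)^k) = (-1) * (-1)^m / (INR m + 1 + q)^k).
    field. apply pow_nonzero. pose proof (pos_INR m). lra. }
  rewrite sum_O in E. unfold zetaE_nat_term in E. simpl in E.
  rewrite Rplus_0_l in E. lra.
Qed.

Lemma zetaE_nat_sub_shift2 (k : nat) (q : R) : 0 < q -> (1 <= k)%nat ->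
  zetaE_nat k q - zetaE_nat k (q + 2) = / q^k - / (q + 1)^k.
Proof.
  intros Hq Hk.
  rewrite <- (zetaE_nat_shift k q), <- (zetaE_nat_shift k (q + 1)) by (lra || lia).
  replace (q + 1 + 1) with (q + 2) by ring. ring.
Qed.

Lemma CVU_scal (c : R) (fn : nat -> R -> R) (f : R -> R) (x : R) (r : posreal) :
  CVU fn f x r -> CVU (fun n y => c * fn n y) (fun y => c * f y) x r.
Proof.
  intros Hcvu eps Heps.
  assert (Hc : 0 < Rabs c + 1) by (pose proof (Rabs_pos c); lra).
  destruct (Hcvu (eps / (Rabs c + 1))) as [N HN]; [apply Rdiv_lt_0_compat; lra|].
  exists N. intros n y Hn Hy. specialize (HN n y Hn Hy).
  rewrite <- Rmult_minus_distr_l, Rabs_mult.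
  apply Rle_lt_trans with ((Rabs c + 1) * Rabs (f y - fn n y)).
  - apply Rmult_le_compat_r; [apply Rabs_pos|lra].
  - apply (Rmult_lt_compat_l (Rabs c + 1)) in HN; [|exact Hc].
    replace ((Rabs c + 1) * (eps / (Rabs c + 1))) with eps in HN by (field; lra). exact HN.
Qed.

Lemma CVU_zetaE_nat (k : nat) (q : R) (r : posreal) : (1 <= k)%nat -> r < q ->
  CVU (fun N y => sum_n (zetaE_nat_term k y) N) (zetaE_nat k) q r.
Proof.
  intros Hk Hr eps Heps.
  destruct (archimed_cor1 eps Heps) as [N [HN HN0]].
  exists N. intros n y Hn Hy.
  assert (Hy0 : 0 < y) by (unfold Boule in Hy; apply Rabs_def2 in Hy; lra).
  eapply Rle_lt_trans; [apply zetaE_nat_remainder; assumption|].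
  eapply Rle_lt_trans; [apply inv_pow_shift_le_inv; assumption|].
  eapply Rle_lt_trans; [|exact HN].
  apply Rinv_le_contravar; [now apply lt_0_INR|]. apply le_INR. lia.
Qed.

Lemma is_derive_zetaE_nat_term (k m : nat) (y : R) : 0 < y ->
  is_derive (fun y => zetaE_nat_term k y m) y (- INR k * zetaE_nat_term (S k) y m).
Proof.
  intro Hy. unfold zetaE_nat_term. pose proof (pos_INR m).
  auto_derive; [apply pow_nonzero; lra|].
  destruct k as [|k]; [simpl; ring|].
  rewrite S_INR. cbn [pow Init.Nat.pred].
  field. split; [apply pow_nonzero|]; lra.
Qed.

Lemma is_derive_zetaE_nat_partial (k N : nat) (y : R) : 0 < y ->
  is_derive (fun y => sum_n (zetaE_nat_term k y) N) y
            (- INR k * sum_n (zetaE_nat_term (S k) y) N).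
Proof.
  intro Hy.
  rewrite <- sum_n_Rmult_l.
  apply (is_derive_sum_n (fun m y => zetaE_nat_term k y m)).
  intros m _. now apply is_derive_zetaE_nat_term.
Qed.

Lemma is_derive_zetaE_nat (k : nat) (q : R) : 0 < q -> (1 <= k)%nat ->
  is_derive (zetaE_nat k) q (- INR k * zetaE_nat (S k) q).
Proof.
  intros Hq Hk.
  assert (Hr2 : 0 < q / 2) by lra. set (r := mkposreal _ Hr2).
  assert (Hball : forall y, Boule q r y -> 0 < y).
  { intros y Hy. unfold Boule in Hy. simpl in Hy. apply Rabs_def2 in Hy. lra. }
  assert (Hr : r < q) by (simpl; lra).
  assert (Hcvu : CVU (fun N y => - INR k * sum_n (zetaE_nat_term (S k) y) N)
                     (fun y => - INR k * zetaE_nat (S k) y) q r).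
  { apply CVU_scal, CVU_zetaE_nat; [lia|exact Hr]. }
  apply is_derive_Reals.
  apply (derivable_pt_lim_CVU (fun N y => sum_n (zetaE_nat_term k y) N)
           (fun N y => - INR k * sum_n (zetaE_nat_term (S k) y) N)
           (zetaE_nat k) (fun y => - INR k * zetaE_nat (S k) y) q q r); [| | |exact Hcvu|].
  - unfold Boule. rewrite Rminus_eq_0, Rabs_R0. simpl; lra.
  - intros y N Hy. apply is_derive_Reals, is_derive_zetaE_nat_partial, Hball, Hy.
  - intros y Hy. apply is_lim_seq_Reals, is_series_zetaE_nat; [apply Hball, Hy|exact Hk].
  - apply (CVU_continuity _ _ q r Hcvu). intros N y Hy.
    apply continuity_pt_filterlim.
    apply (ex_derive_continuous (fun y => - INR k * sum_n (zetaE_nat_term (S k) y) N)).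
    eexists. apply (is_derive_scal (fun y => sum_n (zetaE_nat_term (S k) y) N)).
    apply is_derive_zetaE_nat_partial, Hball, Hy.
Qed.

Lemma Derive_n_psiE (n : nat) (q : R) : 0 < q ->
  Derive_n psiE n q = (-1)^(n + 1) * INR (Factorial.fact n) * zetaE_nat (S n) q.
Proof.
  revert q. induction n as [|n IH]; intros q Hq.
  - simpl. unfold psiE. rewrite <- (zetaE_INR 1 q Hq). simpl. ring.
  - simpl Derive_n.
    rewrite (Derive_ext_loc _ (fun y => (-1)^(n + 1) * INR (Factorial.fact n) * zetaE_nat (S n) y)).
    + apply is_derive_unique.
      replace ((-1)^(S n + 1) * INR (Factorial.fact (S n)) * zetaE_nat (S (S n)) q)
        with ((-1)^(n + 1) * INR (Factorial.fact n) * (- INR (S n) * zetaE_nat (S (S n)) q)).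
      * apply is_derive_scal, is_derive_zetaE_nat; [exact Hq|lia].
      * replace (S n + 1)%nat with (S (n + 1)) by lia.
        rewrite fact_simpl, mult_INR. simpl pow. ring.
    + apply (filter_imp (fun y => 0 < y)); [exact IH|]. exact (open_gt 0 q Hq).
Qed.

Lemma Derive_n_inv_one_minus (m : nat) (t : R) : t < 1 ->
  Derive_n (fun y => / (1 - y)) m t = INR (Factorial.fact m) / (1 - t)^(S m).
Proof.
  revert t. induction m as [|m IH]; intros t Ht.
  - simpl. field. lra.
  - simpl Derive_n.
    rewrite (Derive_ext_loc _ (fun y => INR (Factorial.fact m) / (1 - y)^(S m))).
    + apply is_derive_unique. auto_derive; [exact (pow_nonzero (1 - t) (S m) ltac:(lra))|].
      change (match m with O => 1 | S _ => INR m + 1 end) with (INR (S m)).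
      rewrite fact_simpl, mult_INR, S_INR. cbn [Init.Nat.pred pow].
      assert ((1 - t)^m <> 0) by (apply pow_nonzero; lra).
      unfold Rminus in *. field. split; [apply pow_nonzero|]; lra.
    + apply (filter_imp (fun y => y < 1)); [exact IH|]. exact (open_lt 1 t Ht).
Qed.

Lemma is_series_neg_binomial (m : nat) (t : R) : Rabs t < 1 ->
  is_series (fun j => INR (Factorial.fact (j + m)) / INR (Factorial.fact j) * t^j)
            (INR (Factorial.fact m) / (1 - t)^(S m)).
Proof.
  intro Ht.
  set (ones := fun _ : nat => 1).
  assert (Hrad : CV_radius ones = 1).
  { rewrite (CV_radius_finite_DAlembert ones 1); [simpl; now rewrite Rinv_1| |lra|].
    - intro; unfold ones; lra.
    - eapply is_lim_seq_ext; [|apply is_lim_seq_const].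
      intro. unfold ones. now rewrite Rdiv_1_r, Rabs_R1. }
  assert (Hin : Rbar_lt (Rabs t) (CV_radius ones)) by now rewrite Hrad.
  assert (Hgeom : Derive_n (PSeries ones) m t = INR (Factorial.fact m) / (1 - t)^(S m)).
  { apply Rabs_def2 in Ht.
    rewrite <- (Derive_n_inv_one_minus m t) by lra.
    apply Derive_n_ext_loc.
    apply (filter_imp (fun y => -1 < y /\ y < 1)).
    - intros y Hy. unfold PSeries.
      rewrite <- Series_geom by (apply Rabs_def1; lra).
      apply Series_ext. intro j. unfold ones. ring.
    - apply filter_and; [apply (open_gt (-1) t)|apply (open_lt 1 t)]; lra. }
  assert (Hex : ex_pseries (PS_derive_n m ones) t).
  { apply CV_radius_inside. now rewrite CV_radius_derive_n. }
  pose proof (PSeries_correct _ _ Hex) as Hs.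
  rewrite <- Derive_n_PSeries, Hgeom in Hs by exact Hin.
  eapply is_series_ext; [|exact Hs].
  intro j. unfold PS_derive_n, ones. rewrite pow_n_pow.
  change (t^j * (INR (Factorial.fact (j + m)) / INR (Factorial.fact j) * 1)
          = INR (Factorial.fact (j + m)) / INR (Factorial.fact j) * t^j). ring.
Qed.

Lemma is_series_neg_binomial_scaled (m : nat) (c x : R) : Rabs c < x ->
  is_series (fun j => INR (Factorial.fact (j + m)) / INR (Factorial.fact j)
                      * c^j / x^(S m + j))
            (INR (Factorial.fact m) / (x - c)^(S m)).
Proof.
  intro Hc.
  assert (Hx : 0 < x) by (pose proof (Rabs_pos c); lra).
  assert (Ht : Rabs (c / x) < 1).
  { rewrite Rabs_div, (Rabs_pos_eq x) by lra.
    apply Rmult_lt_reg_r with x; [exact Hx|]. field_simplify; lra. }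
  assert (Hcx : 1 - c / x <> 0) by (apply Rabs_def2 in Ht; lra).
  assert (E : INR (Factorial.fact m) / (x - c)^(S m)
              = / x^(S m) * (INR (Factorial.fact m) / (1 - c / x)^(S m))).
  { replace (x - c) with (x * (1 - c / x)) by (field; lra).
    rewrite Rpow_mult_distr. field. split; apply pow_nonzero; lra. }
  rewrite E.
  eapply is_series_ext; [|exact (is_series_scal_l _ _ _ (is_series_neg_binomial m _ Ht))].
  intro j. unfold scal; simpl; unfold mult; simpl.
  unfold Rdiv. rewrite Rpow_mult_distr, pow_inv, pow_add.
  assert (x^m <> 0) by (apply pow_nonzero; lra).
  assert (x^j <> 0) by (apply pow_nonzero; lra).
  pose proof (INR_fact_neq_0 j). field. lra.
Qed.

Section Interchange.

Variables (c : nat -> R) (s : nat -> nat) (q : R) (G : nat -> R) (L : R).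
Hypotheses (Hq : 0 < q) (Hc : forall j, 0 <= c j) (Hs : forall j, (1 <= s j)%nat).
Hypothesis HG : forall m, is_series (fun j => c j / (INR m + q)^(s j)) (G m).
Hypothesis HL : is_series (fun m => (-1)^m * G m) L.

Let Z j := zetaE_nat (s j) q.

Lemma ex_series_zetaE_nat_combination : ex_series (fun j => c j * Z j).
Proof.
  apply (ex_series_le (V := R_CompleteNormedModule) _ (fun j => c j / (INR 0 + q)^(s j))).
  - intro j. change (Rabs (c j * Z j) <= c j / (0 + q)^(s j)).
    rewrite Rabs_mult, (Rabs_pos_eq (c j) (Hc j)), Rplus_0_l.
    apply Rmult_le_compat_l; [apply Hc|apply Rabs_zetaE_nat_le; auto].
  - now exists (G O).
Qed.

Lemma is_series_zetaE_nat_partial_combination (M : nat) :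
  is_series (fun j => c j * sum_n (zetaE_nat_term (s j) q) M)
            (sum_n (fun m => (-1)^m * G m) M).
Proof.
  eapply is_series_ext;
    [|apply (is_series_sum_n_swap (fun j m => (-1)^m * (c j / (INR m + q)^(s j))))].
  - intro j. rewrite <- sum_n_Rmult_l. apply sum_n_ext. intro m.
    unfold zetaE_nat_term, mult; simpl. field. apply pow_nonzero.
    pose proof (pos_INR m). lra.
  - intro m. exact (is_series_scal_l ((-1)^m) _ _ (HG m)).
Qed.

Lemma zetaE_nat_combination_remainder (M : nat) :
  Rabs (Series (fun j => c j * Z j) - sum_n (fun m => (-1)^m * G m) M) <= G (S M).
Proof.
  set (err := fun j => c j * Z j - c j * sum_n (zetaE_nat_term (s j) q) M).
  assert (Herr : forall j, Rabs (err j) <= c j / (INR (S M) + q)^(s j)).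
  { intro j. unfold err.
    rewrite <- Rmult_minus_distr_l, Rabs_mult, (Rabs_pos_eq (c j) (Hc j)).
    apply Rmult_le_compat_l; [apply Hc|apply zetaE_nat_remainder; auto]. }
  assert (Hbound : ex_series (fun j => c j / (INR (S M) + q)^(s j))) by now exists (G (S M)).
  assert (Habs : ex_series (fun j => Rabs (err j))).
  { apply (ex_series_le (V := R_CompleteNormedModule) _ (fun j => c j / (INR (S M) + q)^(s j)));
      [intro j|exact Hbound]. change (Rabs (Rabs (err j)) <= c j / (INR (S M) + q)^(s j)).
    rewrite Rabs_Rabsolu. apply Herr. }
  replace (Series (fun j => c j * Z j) - sum_n (fun m => (-1)^m * G m) M) with (Series err).
  - eapply Rle_trans; [exact (Series_Rabs _ Habs)|].
    rewrite <- (is_series_unique _ _ (HG (S M))).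
    apply Series_le; [|exact Hbound]. intro j. split; [apply Rabs_pos|apply Herr].
  - apply is_series_unique.
    exact (is_series_minus _ _ _ _ (Series_correct _ ex_series_zetaE_nat_combination)
                                  (is_series_zetaE_nat_partial_combination M)).
Qed.

Lemma is_series_zetaE_nat_combination : is_series (fun j => c j * Z j) L.
Proof.
  assert (Hlim : is_lim_seq (sum_n (fun m => (-1)^m * G m)) (Series (fun j => c j * Z j))).
  { apply (is_lim_seq_of_Rabs_le _ (fun M => Rabs (G (S M)))).
    - intro M. rewrite Rabs_minus_sym.
      eapply Rle_trans; [apply zetaE_nat_combination_remainder|apply Rle_abs].
    - apply is_lim_seq_incr_1 with (u := fun m => Rabs (G m)).
      eapply is_lim_seq_ext;
        [|exact (proj1 (is_lim_seq_abs_0 _) (ex_series_lim_0 _ (ex_intro _ L HL)))].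
      intro m. cbv beta. now rewrite Rabs_mult, pow_1_abs, Rmult_1_l. }
  replace L with (Series (fun j => c j * Z j)).
  - apply Series_correct, ex_series_zetaE_nat_combination.
  - rewrite <- (is_series_unique _ _ HL). symmetry. now apply is_series_unique.
Qed.

End Interchange.

Lemma is_series_shift2_coefficients (n : nat) (x : R) : (0 < n)%nat -> 2 < x ->
  is_series (fun k => 2 ^ (S k) * INR (Factorial.fact (n + S k))
                      / INR (Factorial.fact (S k + 1)) / x ^ (n + S k + 1))
            (/ 2 * INR (Factorial.fact (n - 1)) * (/ (x - 2)^n - / x^n)
             - INR (Factorial.fact n) / x^(n + 1)).
Proof.
  intros Hn Hx.
  assert (H2 : Rabs 2 < x) by (rewrite Rabs_pos_eq; lra).
  pose proof (is_series_neg_binomial_scaled (n - 1) 2 x H2) as H.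
  replace (S (n - 1)) with n in H by lia.
  apply (is_series_tail _ _ 1), (is_series_scal_r (/ 2)) in H.
  revert H. apply is_series_ext_eq.
  - intro k.
    replace (S 1 + k + (n - 1))%nat with (n + S k)%nat by lia.
    replace (S 1 + k)%nat with (S k + 1)%nat by lia.
    replace (n + (S k + 1))%nat with (n + S k + 1)%nat by lia.
    pose proof (INR_fact_neq_0 (S k + 1)).
    assert (x ^ (n + S k + 1) <> 0) by (apply pow_nonzero; lra).
    rewrite pow_add, pow_1. field. auto.
  - rewrite sum_Sn, sum_O, Nat.add_0_l, Nat.add_0_r.
    replace (1 + (n - 1))%nat with n by lia.
    change (plus ?a ?b) with (a + b). simpl Factorial.fact. simpl INR.
    assert (x ^ n <> 0) by (apply pow_nonzero; lra).
    assert ((x - 2) ^ n <> 0) by (apply pow_nonzero; lra).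
    rewrite pow_add. field. lra.
Qed.

Lemma is_series_odd_coefficients (n : nat) (x : R) : (0 < n)%nat -> 1 < x ->
  is_series (fun k => INR (Factorial.fact (n + 2 * S k))
                      / INR (Factorial.fact (2 * S k + 1)) / x ^ (n + 2 * S k + 1))
            (/ 2 * INR (Factorial.fact (n - 1)) * (/ (x - 1)^n - / (x + 1)^n)
             - INR (Factorial.fact n) / x^(n + 1)).
Proof.
  intros Hn Hx.
  assert (Hp : Rabs 1 < x) by (rewrite Rabs_R1; lra).
  assert (Hm : Rabs (-1) < x) by (rewrite Rabs_left; lra).
  pose proof (is_series_minus _ _ _ _ (is_series_neg_binomial_scaled (n - 1) 1 x Hp)
                                      (is_series_neg_binomial_scaled (n - 1) (-1) x Hm)) as H.
  replace (S (n - 1)) with n in H by lia.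
  (* [1^j - (-1)^j] kills the even terms and doubles the odd ones *)
  apply is_series_odd_terms in H.
  2:{ intro k. rewrite pow1, pow_1_even. unfold minus, plus, opp; simpl. ring. }
  apply (is_series_tail _ _ 0), (is_series_scal_r (/ 2)) in H.
  revert H. apply is_series_ext_eq.
  - intro k. change (plus ?a (opp ?b)) with (a - b).
    replace (2 * (S 0 + k) + 1)%nat with (S (2 * S k)) by lia.
    rewrite pow1, pow_1_odd.
    replace (S (2 * S k) + (n - 1))%nat with (n + 2 * S k)%nat by lia.
    replace (n + S (2 * S k))%nat with (n + 2 * S k + 1)%nat by lia.
    replace (S (2 * S k)) with (2 * S k + 1)%nat by lia.
    pose proof (INR_fact_neq_0 (2 * S k + 1)).
    assert (x ^ (n + 2 * S k + 1) <> 0) by (apply pow_nonzero; lra).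
    field. auto.
  - rewrite sum_O. change (plus ?a (opp ?b)) with (a - b).
    replace (2 * 0 + 1 + (n - 1))%nat with n by lia.
    replace (x - -1) with (x + 1) by ring.
    change (Factorial.fact (2 * 0 + 1)) with 1%nat. simpl INR. simpl pow.
    assert (x ^ (n + 1) <> 0) by (apply pow_nonzero; lra).
    assert ((x - 1) ^ n <> 0) by (apply pow_nonzero; lra).
    assert ((x + 1) ^ n <> 0) by (apply pow_nonzero; lra).
    field. auto.
Qed.

Lemma is_series_alternating_shift2_difference (k : nat) (q : R) : 0 < q -> (1 <= k)%nat ->
  is_series (fun m => (-1)^m * (/ (INR m + q)^k - / (INR m + q + 2)^k))
            (/ q^k - / (q + 1)^k).
Proof.
  intros Hq Hk.
  assert (Hq2 : 0 < q + 2) by lra.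
  pose proof (is_series_minus _ _ _ _ (is_series_zetaE_nat k q Hq Hk)
                                      (is_series_zetaE_nat k (q + 2) Hq2 Hk)) as H.
  revert H. apply is_series_ext_eq.
  - intro m. change (plus ?a (opp ?b)) with (a - b). unfold zetaE_nat_term.
    replace (INR m + (q + 2)) with (INR m + q + 2) by ring.
    pose proof (pos_INR m).
    assert ((INR m + q)^k <> 0) by (apply pow_nonzero; lra).
    assert ((INR m + q + 2)^k <> 0) by (apply pow_nonzero; lra).
    field. auto.
  - change (plus ?a (opp ?b)) with (a - b). now apply zetaE_nat_sub_shift2.
Qed.

Lemma is_series_alternating_expansion (n : nat) (q d A B : R) :
  (0 < n)%nat -> 0 < q - d -> 0 < q ->
  is_series (fun m => (-1)^m * (A * (/ (INR m + q - d)^n - / (INR m + q - d + 2)^n)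
                                - B / (INR m + q)^(n + 1)))
            (A * (/ (q - d)^n - / (q - d + 1)^n) - B * zetaE_nat (n + 1) q).
Proof.
  intros Hn Hqd Hq.
  pose proof (is_series_minus _ _ _ _
    (is_series_scal_r A _ _ (is_series_alternating_shift2_difference n (q - d) Hqd Hn))
    (is_series_scal_r B _ _ (is_series_zetaE_nat (n + 1) q Hq ltac:(lia)))) as H.
  revert H. apply is_series_ext_eq.
  - intro m. change (plus ?a (opp ?b)) with (a - b). unfold zetaE_nat_term.
    replace (INR m + (q - d)) with (INR m + q - d) by ring.
    pose proof (pos_INR m).
    assert ((INR m + q)^(n + 1) <> 0) by (apply pow_nonzero; lra).
    assert ((INR m + q - d)^n <> 0) by (apply pow_nonzero; lra).
    assert ((INR m + q - d + 2)^n <> 0) by (apply pow_nonzero; lra).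
    field. auto.
  - change (plus ?a (opp ?b)) with (a - b). ring.
Qed.

Lemma Derive_n_psiE_shift2_expansion (n : nat) (q : R) : (0 < n)%nat -> 2 < q ->
  let a := fun k : nat =>
    2 ^ (S k) * INR (Factorial.fact (n + S k)) / INR (Factorial.fact (S k + 1))
    * zetaE (INR (n + S k + 1)) q in
  ex_series a /\
  Derive_n psiE n q =
    / 2 * (-1) ^ (n + 1) * INR (Factorial.fact (n - 1)) * (/ (q - 2) ^ n - / (q - 1) ^ n)
    + (-1) ^ n * Series a.
Proof.
  intros Hn Hq a.
  set (A := / 2 * INR (Factorial.fact (n - 1))).
  set (B := INR (Factorial.fact n)).
  set (L := A * (/ (q - 2)^n - / (q - 2 + 1)^n) - B * zetaE_nat (n + 1) q).
  assert (Ha : is_series a L).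
  { eapply is_series_ext;
      [|apply (is_series_zetaE_nat_combination
                 (fun k => 2 ^ (S k) * INR (Factorial.fact (n + S k)) / INR (Factorial.fact (S k + 1)))
                 (fun k => n + S k + 1)%nat q
                 (fun m => A * (/ (INR m + q - 2)^n - / (INR m + q - 2 + 2)^n)
                           - B / (INR m + q)^(n + 1)))].
    - intro k. cbv beta. unfold a. rewrite zetaE_INR by lra. reflexivity.
    - lra.
    - intro k. apply Rmult_le_pos; [apply Rmult_le_pos; [apply pow_le; lra|apply pos_INR]|].
      left. apply Rinv_0_lt_compat, INR_fact_lt_0.
    - intro k. lia.
    - intro m. cbv beta.
      replace (INR m + q - 2 + 2) with (INR m + q) by ring.
      apply is_series_shift2_coefficients; [exact Hn|]. pose proof (pos_INR m). lra.
    - apply is_series_alternating_expansion; [exact Hn|lra|lra]. }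
  split; [now exists L|].
  rewrite (is_series_unique _ _ Ha), Derive_n_psiE by lra.
  unfold L, A, B. replace (q - 2 + 1) with (q - 1) by ring.
  rewrite Nat.add_1_r. simpl pow. ring.
Qed.

Lemma Derive_n_psiE_odd_expansion (n : nat) (q : R) : (0 < n)%nat -> 1 < q ->
  let b := fun k : nat =>
    INR (Factorial.fact (n + 2 * S k)) / INR (Factorial.fact (2 * S k + 1))
    * zetaE (INR (n + 2 * S k + 1)) q in
  ex_series b /\
  Derive_n psiE n q =
    / 2 * (-1) ^ (n + 1) * INR (Factorial.fact (n - 1)) * (/ (q - 1) ^ n - / q ^ n)
    + (-1) ^ n * Series b.
Proof.
  intros Hn Hq b.
  set (A := / 2 * INR (Factorial.fact (n - 1))).
  set (B := INR (Factorial.fact n)).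
  set (L := A * (/ (q - 1)^n - / (q - 1 + 1)^n) - B * zetaE_nat (n + 1) q).
  assert (Hb : is_series b L).
  { eapply is_series_ext;
      [|apply (is_series_zetaE_nat_combination
                 (fun k => INR (Factorial.fact (n + 2 * S k)) / INR (Factorial.fact (2 * S k + 1)))
                 (fun k => n + 2 * S k + 1)%nat q
                 (fun m => A * (/ (INR m + q - 1)^n - / (INR m + q - 1 + 2)^n)
                           - B / (INR m + q)^(n + 1)))].
    - intro k. cbv beta. unfold b. rewrite zetaE_INR by lra. reflexivity.
    - lra.
    - intro k. apply Rmult_le_pos; [apply pos_INR|].
      left. apply Rinv_0_lt_compat, INR_fact_lt_0.
    - intro k. lia.
    - intro m. cbv beta.
      replace (INR m + q - 1 + 2) with (INR m + q + 1) by ring.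
      apply is_series_odd_coefficients; [exact Hn|]. pose proof (pos_INR m). lra.
    - apply is_series_alternating_expansion; [exact Hn|lra|lra]. }
  split; [now exists L|].
  rewrite (is_series_unique _ _ Hb), Derive_n_psiE by lra.
  unfold L, A, B. replace (q - 1 + 1) with q by ring.
  rewrite Nat.add_1_r. simpl pow. ring.
Qed.

Theorem proposition3p20 (n : nat) (Hn : (0 < n)%nat) :
  (forall q : R, 2 < q ->
     let a := fun k : nat =>
       2 ^ (S k) * INR (Factorial.fact (n + S k)) / INR (Factorial.fact (S k + 1))
       * zetaE (INR (n + S k + 1)) q in
     ex_series a /\
     Derive_n psiE n q =
       / 2 * (-1) ^ (n + 1) * INR (Factorial.fact (n - 1))
         * (/ (q - 2) ^ n - / (q - 1) ^ n)
       + (-1) ^ n * Series a)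
  /\
  (forall q : R, 1 < q ->
     let b := fun k : nat =>
       INR (Factorial.fact (n + 2 * S k)) / INR (Factorial.fact (2 * S k + 1))
       * zetaE (INR (n + 2 * S k + 1)) q in
     ex_series b /\
     Derive_n psiE n q =
       / 2 * (-1) ^ (n + 1) * INR (Factorial.fact (n - 1))
         * (/ (q - 1) ^ n - / q ^ n)
       + (-1) ^ n * Series b).
Proof.
  split; intros q Hq.
  - exact (Derive_n_psiE_shift2_expansion n q Hn Hq).
  - exact (Derive_n_psiE_odd_expansion n q Hn Hq).
Qed.
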